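(* If a \textsc{2-Visits} instance has a feasible schedule, then it has a feasible schedule in which all secondary visits are placed in gaps (equivalently, no primary visit is placed in a gap).
   Context: \textsc{2-Visits} (primary/secondary formulation): given non-decreasing positive integers $d_1\le\dots\le d_n$, a feasible schedule is a schedule of length $2n$ (each position $1,\dots,2n$ holds one visit) containing one primary and one secondary visit of each node $i\in[n]$, such that the primary visit of $i$ is at position at most $d_i$, and the secondary visit of $i$ is either before its primary visit or at most $d_i$ positions after its primary visit. The discretized sequence $A=\langle a_1,\dots,a_n\rangle$ is defined by $a_n=d_n$ and $a_i=\min\{a_{i+1}-1,d_i\}$ for $i<n$; a position $p\in[2n]$ is a gap if $p\notin A$. Standing assumptions: all entries of $A$ are positive and all $d_i\le 2n$ (so there are exactly $n$ gaps in $[2n]$). *)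

From mathcomp Require Import all_boot.
Unset Printing Implicit Defensive.

(* An instance is a sequence d = [:: d_1; ...; d_n] (node i of the paper is
   index i-1 here); n = size d.  Positions are the naturals 1 .. 2n. *)

(* Discretized sequence A = [:: a_1; ...; a_n]:
   a_n = d_n and a_i = min (a_{i+1} - 1) d_i.  (nat subtraction; it agrees
   with integer subtraction whenever all a_i are positive, which is a
   standing assumption.) *)
Definition disc (d : seq nat) : seq nat :=
  foldr (fun di acc => match acc with
                       | [::] => [:: di]
                       | a :: _ => minn (a - 1) di :: acc
                       end) [::] d.

Definition gap (d : seq nat) (p : nat) : bool := p \notin disc d.

(* A schedule is given by the positions of the primary visit (prim i) and of
   the secondary visit (sec i) of each node i; all 2n visits occupy pairwise
   distinct positions in 1..2n, i.e. each of the 2n positions holds exactly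
   one visit. *)
Definition feasible (d : seq nat) (prim sec : 'I_(size d) -> nat) : Prop :=
  (forall i, 1 <= prim i <= 2 * size d) /\
  (forall i, 1 <= sec i <= 2 * size d) /\
  (forall i j, prim i <> sec j) /\
  (forall i j, prim i = prim j -> i = j) /\
  (forall i j, sec i = sec j -> i = j) /\
  (forall i, prim i <= nth 0 d i) /\
  (forall i, sec i < prim i \/ sec i <= prim i + nth 0 d i).
Arguments feasible d prim sec : clear implicits.

From mathcomp Require Import all_boot zify.

Set Implicit Arguments.
Unset Strict Implicit.
Unset Printing Implicit Defensive.

(* Exchange argument.  Let a secondary visit of some node j sit at a position
   x = a_i of A.  Counting primaries shows that some node h has its primary
   visit before x while x <= d_h: the nodes 0..l, where d_l = a_i + (l - i),
   have at most l - i primaries in (a_i, d_l], so more than i of them lie at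
   or before a_i, whereas a primary at p_h < a_i with d_h < a_i forces h < i.
   Moving the primary of h to x and the secondary of j to the old position
   p_h keeps the schedule feasible and strictly decreases the total slack
   sum_h (d_h - p_h), so iterating empties A of secondary visits. *)

Lemma disc_cons x l :
  disc (x :: l) = if disc l is a :: _ then minn (a - 1) x :: disc l else [:: x].
Proof. by []. Qed.

Lemma size_disc d : size (disc d) = size d.
Proof.
elim: d => // x l IHl; rewrite disc_cons.
by case: (disc l) IHl => [|a t] /= <-.
Qed.

Lemma nth_disc_leq d i h : i <= h < size d -> nth 0 (disc d) i <= nth 0 d h.
Proof.
elim: d i h => [|x l IHl] i h; first by rewrite ltn0 andbF.
rewrite disc_cons.
case Dl: (disc l) => [|a t].
  have := size_disc l; rewrite Dl; case: l {IHl Dl} => // _.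
  by case: h i => [|h] [|i] //=; rewrite nth_nil.
case: i h => [|i] [|h] //= hih.
- exact: geq_minr.
- by have := IHl 0 h hih; rewrite Dl /=; lia.
- by have := IHl i h hih; rewrite Dl.
Qed.

(* Positivity of A is needed: otherwise [a - 1] truncates at 0. *)
Lemma nth_disc_attained d i : all (fun a => 0 < a) (disc d) -> i < size d ->
  exists2 l, i <= l < size d & nth 0 (disc d) i + (l - i) = nth 0 d l.
Proof.
elim: d i => [|x l IHl] i //; rewrite disc_cons.
case Dl: (disc l) => [|a t].
  have := size_disc l; rewrite Dl; case: l {IHl Dl} => // _ _ /= i_lt.
  have -> : i = 0 by lia.
  by exists 0; rewrite //= addn0.
move=> /andP[_ pos_l]; have a_gt0 : 0 < a by case/andP: pos_l.
have {pos_l} pos_disc_l : all (fun a => 0 < a) (disc l) by rewrite Dl.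
have {}IHl := IHl _ pos_disc_l.
have l_gt0 : 0 < size l by rewrite -size_disc Dl.
case: i => [|i] /= i_lt.
- have [x_le | a_le] := leqP x (a - 1); first by exists 0 => //=; lia.
  have [k k_lt] := IHl 0 l_gt0; rewrite Dl /= => dk.
  by exists k.+1 => /=; lia.
- have [k k_lt] := IHl i i_lt; rewrite Dl => dk.
  by exists k.+1 => //=; rewrite subSS.
Qed.

Lemma card_ord_ltn n m : #|[pred h : 'I_n | h < m]| = minn m n.
Proof.
rewrite cardE /enum_mem size_filter -enumT.
rewrite -(count_map val (fun h => h < m)) val_enum_ord.
elim: n => // n IHn.
by rewrite -addn1 iotaD count_cat IHn /=; lia.
Qed.

Lemma card_inj_window (T : finType) (f : T -> nat) (P : {pred T}) lo k :
  injective f -> (forall x, x \in P -> lo < f x <= lo + k) -> #|P| <= k.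
Proof.
move=> f_inj f_win; rewrite cardE -(size_map f) -[k](size_iota lo.+1).
apply: uniq_leq_size; first by rewrite (map_inj_uniq f_inj) enum_uniq.
move=> y /mapP[x]; rewrite mem_enum => /f_win fx ->.
by rewrite mem_iota; lia.
Qed.

Section PrimaryCount.

Variables (d : seq nat) (p : 'I_(size d) -> nat).
Hypotheses (d_sorted : sorted leq d) (disc_pos : all (fun a => 0 < a) (disc d)).
Hypotheses (p_inj : injective p) (p_deadline : forall h, p h <= nth 0 d h).

Local Notation a i := (nth 0 (disc d) i).

Lemma card_prim_leq_disc i : i < size d -> i < #|[set h | p h <= a i]|.
Proof.
move=> i_lt; have [l /andP[il l_lt] dl] := nth_disc_attained disc_pos i_lt.
set B := [set h | p h <= a i].
pose C := [set h : 'I_(size d) | (h <= l) && (a i < p h)].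
have card_C : #|C| <= l - i.
  apply: (card_inj_window (lo := a i) p_inj) => h; rewrite inE => /andP[hl ap].
  have := sorted_leq_nth leq_trans leqnn 0 d_sorted _ _ (ltn_ord h) l_lt hl.
  by have := p_deadline h; lia.
have cover : #|[pred h : 'I_(size d) | h < l.+1]| <= #|B :|: C|.
  by apply: subset_leq_card; apply/subsetP => h; rewrite !inE /=; lia.
by move: cover (cardsUI B C); rewrite card_ord_ltn; lia.
Qed.

Lemma exists_prim_straddling_disc i : i < size d -> (forall h, p h != a i) ->
  exists h, p h < a i <= nth 0 d h.
Proof.
move=> i_lt p_neq.
suff /existsP[h ph] : [exists h, p h < a i <= nth 0 d h] by exists h.
apply: contraT => /existsPn none.
have below : #|[set h | p h <= a i]| <= #|[pred h : 'I_(size d) | h < i]|.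
  apply: subset_leq_card; apply/subsetP => h /=; rewrite !inE => pa.
  have p_lt : p h < a i by rewrite ltn_neqAle p_neq.
  have := none h; rewrite p_lt /= -ltnNge => d_lt.
  rewrite ltnNge; apply: contraL d_lt => ih; rewrite -leqNgt.
  by apply: nth_disc_leq; rewrite ih ltn_ord.
by move: below (card_prim_leq_disc i_lt); rewrite card_ord_ltn; lia.
Qed.

End PrimaryCount.

Definition slack d (p : 'I_(size d) -> nat) := \sum_(h < size d) (nth 0 d h - p h).

Lemma slack_update_ltn d (p : 'I_(size d) -> nat) h x : p h < x <= nth 0 d h ->
  slack [eta p with h |-> x] < slack p.
Proof.
move=> px; rewrite /slack (bigD1 h) // [X in _ < X](bigD1 h) //= eqxx.
rewrite (eq_bigr (fun k : 'I_(size d) => nth 0 d k - p k)) => [|k /negbTE-> //].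
by rewrite ltn_add2r; lia.
Qed.

Lemma feasible_exchange d (p s : 'I_(size d) -> nat) h j :
  feasible d p s -> p h < s j <= nth 0 d h ->
  feasible d [eta p with h |-> s j] [eta s with j |-> p h].
Proof.
move=> [p_rng [s_rng [ps_neq [p_inj [s_inj [p_dl s_dl]]]]]] ps.
have s_le k : s k <= p k + nth 0 d k by case: (s_dl k); lia.
split; [|split; [|split; [|split; [|split; [|split]]]]] => /=.
- by move=> k; case: eqP => _; [exact: s_rng | exact: p_rng].
- by move=> k; case: eqP => _; [exact: p_rng | exact: s_rng].
- move=> k k'; case: (k =P h) => [_|kh]; case: (k' =P j) => [_|kj].
  + lia.
  + by move/s_inj/esym.
  + by move/p_inj.
  + exact: ps_neq.
- move=> k k'; case: (k =P h) => [->|_]; case: (k' =P h) => [->|_] //.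
  + by move=> /esym /ps_neq.
  + by move=> /ps_neq.
  + exact: p_inj.
- move=> k k'; case: (k =P j) => [->|_]; case: (k' =P j) => [->|_] //.
  + by move=> /ps_neq.
  + by move=> /esym /ps_neq.
  + exact: s_inj.
- by move=> k; case: eqP => [->|_]; [lia | exact: p_dl].
- move=> k; right; case: (k =P j) => [kj|_]; case: (k =P h) => [kh|_].
  + lia.
  + by rewrite kj; have := s_le j; lia.
  + by rewrite kh; have := s_le h; lia.
  + exact: s_le.
Qed.

Lemma feasible_gap_schedule d (p s : 'I_(size d) -> nat) :
  sorted leq d -> all (fun a => 0 < a) (disc d) -> feasible d p s ->
  exists prim sec, feasible d prim sec /\ (forall i, gap d (sec i)).
Proof.
move=> d_sorted disc_pos; have [N] := ubnP (slack p).
elim: N p s => // N IHN p s slack_lt F.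
have [/existsP[j sjA]|/existsPn gaps] := boolP [exists j, s j \in disc d]; last first.
  by exists p, s.
have [_ [_ [ps_neq [p_inj [_ [p_dl _]]]]]] := F.
have i_lt : index (s j) (disc d) < size d by rewrite -size_disc index_mem.
have [h ph] : exists h, p h < s j <= nth 0 d h.
  rewrite -(nth_index 0 sjA); apply: exists_prim_straddling_disc => // h.
  by rewrite nth_index //; apply/eqP.
apply: (IHN _ _ _ (feasible_exchange F ph)).
exact: leq_trans (slack_update_ltn ph) (ltnSE slack_lt).
Qed.

Theorem lemma5 (d : seq nat)
  (Hsorted : sorted leq d)
  (Hpos : all (fun x => 0 < x) d)
  (HApos : all (fun a => 0 < a) (disc d))
  (Hle : all (fun x => x <= 2 * size d) d) :
  (exists prim sec : 'I_(size d) -> nat, feasible d prim sec) ->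
  exists prim sec : 'I_(size d) -> nat,
    feasible d prim sec /\ (forall i, gap d (sec i)).
Proof. by move=> [p [s F]]; apply: feasible_gap_schedule F. Qed.
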